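(* In System $\mathsf{F_{<:}^{K\top}}$, for all $\Theta\vdash S$ and $\Theta\vdash T$: $\Theta \vdash S <: T$ if and only if $\Theta \vdash_A S <: T$.
   Context: System $\mathsf{F_{<:}^{K\top}}$: raw types $T ::= \top \mid X \mid T\to T \mid \forall^{\mathsf K}(X<:T).T \mid \forall^\top(X<:T).T$, up to $\alpha$-conversion. Contexts $\Theta$: finite sequences of $X<:T$ or $x:T$ with distinct variables, each type well-formed over the preceding part. Declarative subtyping $\Theta\vdash S<:T$: (Var) $\Theta,X<:T,\Theta'\vdash X<:T$; (Top) $\Theta\vdash T<:\top$; (Refl) $\Theta\vdash T<:T$; (Trans) from $T<:T'$ and $T'<:T''$ infer $T<:T''$; ($\to$) from $\Theta\vdash S'<:S$ and $\Theta\vdash T<:T'$ infer $\Theta\vdash S\to T<:S'\to T'$; ($\forall$-Fun) from $\Theta,X<:S\vdash T<:T'$ infer $\Theta\vdash\forall^{\mathsf K}(X<:S).T<:\forall^{\mathsf K}(X<:S).T'$; ($\forall$-Loc) from $\Theta\vdash T_0<:S_0$ and $\Theta,X<:S_0\vdash S_1<:T_1$ infer $\Theta\vdash\forall^{\mathsf K}(X<:S_0).S_1<:\forall^\top(X<:T_0).T_1$; ($\forall$-Top) from $\Theta\vdash T_0<:S_0$ and $\Theta,X<:\top\vdash S_1<:T_1$ infer $\Theta\vdash\forall^\top(X<:S_0).S_1<:\forall^\top(X<:T_0).T_1$. Algorithmic subtyping $\Theta\vdash_A S<:T$: (1) $\Theta\vdash_A T<:\top$; (2) $\Theta\vdash_A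 X<:X$; (3) if $T\not\equiv\top$, $T\not\equiv X$ and $\Theta,X<:S,\Theta'\vdash_A S<:T$, then $\Theta,X<:S,\Theta'\vdash_A X<:T$; (4)–(7) the rules $\to$, $\forall$-Fun, $\forall$-Loc, $\forall$-Top above with $\vdash$ replaced by $\vdash_A$ throughout. *)

From Stdlib Require Import Arith List.
Import ListNotations.

(* Raw types. Bound variable of a quantifier is index 0 in its body.
   allK S T = forall^K (X<:S).T ;  allT S T = forall^Top (X<:S).T *)
Inductive typ : Type :=
  | ttop : typ
  | tvar : nat -> typ
  | tarr : typ -> typ -> typ
  | tallK : typ -> typ -> typ
  | tallT : typ -> typ -> typ.

(* Context entries: X <: T  or  x : T.  Head of the list = most recent.
   Type-variable indices count only type-variable entries. *)
Inductive binding : Type :=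
  | bsub : typ -> binding
  | bvar : typ -> binding.

Definition ctx := list binding.

Fixpoint tshift (c : nat) (T : typ) : typ :=
  match T with
  | ttop => ttop
  | tvar n => if n <? c then tvar n else tvar (S n)
  | tarr T1 T2 => tarr (tshift c T1) (tshift c T2)
  | tallK T1 T2 => tallK (tshift c T1) (tshift (S c) T2)
  | tallT T1 T2 => tallT (tshift c T1) (tshift (S c) T2)
  end.

Fixpoint ntv (G : ctx) : nat :=
  match G with
  | [] => 0
  | bsub _ :: G' => S (ntv G')
  | bvar _ :: G' => ntv G'
  end.

(* bound of type variable n, expressed in the full context G *)
Fixpoint get_bound (G : ctx) (n : nat) : option typ :=
  match G with
  | [] => None
  | bvar _ :: G' => get_bound G' n
  | bsub U :: G' =>
      match n with
      | 0 => Some (tshift 0 U)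
      | S m => option_map (tshift 0) (get_bound G' m)
      end
  end.

Fixpoint wf_typ_n (k : nat) (T : typ) : Prop :=
  match T with
  | ttop => True
  | tvar n => n < k
  | tarr T1 T2 => wf_typ_n k T1 /\ wf_typ_n k T2
  | tallK T1 T2 => wf_typ_n k T1 /\ wf_typ_n (S k) T2
  | tallT T1 T2 => wf_typ_n k T1 /\ wf_typ_n (S k) T2
  end.

Definition wf_typ (G : ctx) (T : typ) : Prop := wf_typ_n (ntv G) T.

Fixpoint wf_ctx (G : ctx) : Prop :=
  match G with
  | [] => True
  | bsub U :: G' => wf_ctx G' /\ wf_typ G' U
  | bvar U :: G' => wf_ctx G' /\ wf_typ G' U
  end.

Inductive sub : ctx -> typ -> typ -> Prop :=
  | sub_var : forall G n U, get_bound G n = Some U -> sub G (tvar n) U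
  | sub_top : forall G T, sub G T ttop
  | sub_refl : forall G T, sub G T T
  | sub_trans : forall G T T' T'', sub G T T' -> sub G T' T'' -> sub G T T''
  | sub_arr : forall G S S' T T',
      sub G S' S -> sub G T T' -> sub G (tarr S T) (tarr S' T')
  | sub_allfun : forall G S T T',
      sub (bsub S :: G) T T' -> sub G (tallK S T) (tallK S T')
  | sub_allloc : forall G S0 S1 T0 T1,
      sub G T0 S0 -> sub (bsub S0 :: G) S1 T1 ->
      sub G (tallK S0 S1) (tallT T0 T1)
  | sub_alltop : forall G S0 S1 T0 T1,
      sub G T0 S0 -> sub (bsub ttop :: G) S1 T1 ->
      sub G (tallT S0 S1) (tallT T0 T1).

Inductive asub : ctx -> typ -> typ -> Prop :=
  | asub_top : forall G T, asub G T ttop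
  | asub_refl_var : forall G n, asub G (tvar n) (tvar n)
  | asub_var : forall G n U T,
      T <> ttop -> T <> tvar n -> get_bound G n = Some U ->
      asub G U T -> asub G (tvar n) T
  | asub_arr : forall G S S' T T',
      asub G S' S -> asub G T T' -> asub G (tarr S T) (tarr S' T')
  | asub_allfun : forall G S T T',
      asub (bsub S :: G) T T' -> asub G (tallK S T) (tallK S T')
  | asub_allloc : forall G S0 S1 T0 T1,
      asub G T0 S0 -> asub (bsub S0 :: G) S1 T1 ->
      asub G (tallK S0 S1) (tallT T0 T1)
  | asub_alltop : forall G S0 S1 T0 T1,
      asub G T0 S0 -> asub (bsub ttop :: G) S1 T1 ->
      asub G (tallT S0 S1) (tallT T0 T1).

(* Every algorithmic rule is derivable declaratively (the variable rule is
   Var followed by Trans), which gives soundness.  For completeness it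
   suffices that the algorithmic relation is reflexive and transitive.
   Transitivity goes by induction on the middle type, with an inner
   induction on the left derivation to follow chains of variable bounds.
   The only change of context it needs arises when a K-quantifier is below a
   Top-quantifier: the body comparison made under a bound Top must be reused
   under the bound S0.  That narrowing is harmless because a variable bounded
   by Top is algorithmically below nothing but Top and itself. *)
From Stdlib Require Import Arith List.
Import ListNotations.

Lemma asub_var_bound : forall G n U T,
  get_bound G n = Some U -> asub G U T -> asub G (tvar n) T.
Proof.
  intros G n U T Hbound HUT.
  destruct T as [| m | | |]; try (eapply asub_var; eauto; congruence).
  - apply asub_top.
  - destruct (Nat.eq_dec m n) as [-> | Hne].
    + apply asub_refl_var.
    + eapply asub_var; eauto; congruence.
Qed.

Lemma asub_refl : forall T G, asub G T T.
Proof.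
  induction T; intros G.
  - apply asub_top.
  - apply asub_refl_var.
  - apply asub_arr; auto.
  - apply asub_allfun; auto.
  - apply asub_alltop; auto.
Qed.

Definition refines_top_bounds (G1 G2 : ctx) : Prop :=
  forall n U, get_bound G1 n = Some U -> U = ttop \/ get_bound G2 n = Some U.

Lemma refines_top_bounds_cons : forall G1 G2 S,
  refines_top_bounds G1 G2 -> refines_top_bounds (bsub S :: G1) (bsub S :: G2).
Proof.
  intros G1 G2 S Href [| m] U Hbound; simpl in *.
  - right; exact Hbound.
  - destruct (get_bound G1 m) as [U' |] eqn:E; simpl in Hbound; [| discriminate].
    injection Hbound as <-.
    destruct (Href m U' E) as [-> | E2].
    + left; reflexivity.
    + right; rewrite E2; reflexivity.
Qed.

Lemma refines_top_bounds_top : forall G S,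
  refines_top_bounds (bsub ttop :: G) (bsub S :: G).
Proof.
  intros G S [| m] U Hbound; simpl in *.
  - left; congruence.
  - right; exact Hbound.
Qed.

Lemma asub_refine_top_bounds : forall G1 S T, asub G1 S T ->
  forall G2, refines_top_bounds G1 G2 -> asub G2 S T.
Proof.
  induction 1 as [| | G n U V Hntop Hnvar Hbound HUV IH | | | |];
    intros G2 Href; try (constructor; auto using refines_top_bounds_cons; fail).
  destruct (Href n U Hbound) as [-> | Hbound2].
  - inversion HUV; congruence.
  - eapply asub_var; eauto.
Qed.

Lemma asub_trans : forall Q G S T, asub G S Q -> asub G Q T -> asub G S T.
Proof.
  induction Q as [| m | Q1 IHQ1 Q2 IHQ2 | Q1 IHQ1 Q2 IHQ2 | Q1 IHQ1 Q2 IHQ2];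
    intros G S T HSQ;
    match type of HSQ with asub _ _ ?Q => remember Q as Q' eqn:EQ in HSQ end;
    revert T; induction HSQ; intros R HQT; try discriminate EQ; subst;
    try (eapply asub_var_bound; eauto; fail).
  - inversion HQT; subst; apply asub_top.
  - injection EQ as ->; exact HQT.
  - injection EQ as <- <-.
    inversion HQT; subst; [apply asub_top |].
    apply asub_arr; eauto.
  - injection EQ as <- <-.
    inversion HQT; subst; [apply asub_top | |].
    + apply asub_allfun; eauto.
    + apply asub_allloc; eauto.
  - injection EQ as <- <-.
    inversion HQT; subst; [apply asub_top |].
    (* Q2 <: T's body was checked under the bound Top, but is needed under S0. *)
    apply asub_allloc; eauto.
    eapply IHQ2; eauto.
    eapply asub_refine_top_bounds; eauto using refines_top_bounds_top.
  - injection EQ as <- <-.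
    inversion HQT; subst; [apply asub_top |].
    apply asub_alltop; eauto.
Qed.

Lemma sub_asub : forall G S T, sub G S T -> asub G S T.
Proof.
  induction 1; eauto using asub_var_bound, asub_refl, asub_trans, asub.
Qed.

Lemma asub_sub : forall G S T, asub G S T -> sub G S T.
Proof.
  induction 1; eauto using sub.
Qed.

Theorem proposition6p2 :
  forall (G : ctx) (S T : typ),
    wf_ctx G -> wf_typ G S -> wf_typ G T ->
    (sub G S T <-> asub G S T).
Proof.
  intros G S T _ _ _; split; [apply sub_asub | apply asub_sub].
Qed.
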